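(* Let $N\ge1$ and $K(x,y)=2\sum_{j=0}^{N-1}\sin\left(\frac{2j+1}{2}x\right)\sin\left(\frac{2j+1}{2}y\right)$. For $a,b,c,d\in\mathbb{Z}$ define $\Pi(a)=\frac1\pi\int_0^\pi K(x,x)\cos(ax)\,\mathrm{d}x$, $\Pi(a,b)=\frac1{\pi^2}\int_0^\pi\int_0^\pi K(x,y)^2\cos(ax)\cos(by)\,\mathrm{d}x\,\mathrm{d}y$, $\Pi(a,b,c)=\frac1{\pi^3}\int_{[0,\pi]^3}K(x,y)K(y,z)K(z,x)\cos(ax)\cos(by)\cos(cz)\,\mathrm{d}x\,\mathrm{d}y\,\mathrm{d}z$, $\Pi(a,b,c,d)=\frac1{\pi^4}\int_{[0,\pi]^4}K(x,y)K(y,z)K(z,w)K(w,x)\cos(ax)\cos(by)\cos(cz)\cos(dw)\,\mathrm{d}x\,\mathrm{d}y\,\mathrm{d}z\,\mathrm{d}w$, and let $\varepsilon(a)=\mathbb{1}_{\{1\le a\le 2N-1,\ a\text{ odd}\}}$, $\alpha(a,b,c)=(\min\{a,N\}+\min\{b,N\}-c)^+$ where $x^+=\max\{x,0\}$. Then $\Pi(0)=\Pi(0,0)=N$, and for all integers $k,\ell\ge1$: $\Pi(k)=-\frac{\varepsilon(k)}2$; $\Pi(k,\ell)=\frac{(2N-k)^+}{4}$ if $k=\ell$ and $\Pi(k,\ell)=-\frac{\varepsilon(k+\ell)}{2}$ if $k\ne\ell$; $\Pi(0,k)=-\frac{\varepsilon(k)}{2}$; $\Pi(k,\ell,\ell)=\frac{(2N-k)^+}{8}$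 if $k=2\ell$ and $\Pi(k,\ell,\ell)=-\frac{3\varepsilon(k+2\ell)+\varepsilon(k)\varepsilon(|2\ell-k|)}{8}$ if $k\ne 2\ell$; $\Pi(k,\ell,k+\ell)=\frac{(N-k-\ell)^+}{4}+\frac{\alpha(k+\ell,\ell,k+\ell)+\alpha(k+\ell,k,k+\ell)}{8}$; $\Pi(0,k,k)=\frac{(2N-k)^+}{4}$ and $\Pi(k,k,k,k)=\frac{(N-k)^+}{4}+\frac{(2N-k)^+}{16}$; and if $k\ne\ell$, $\Pi(k,k,\ell,\ell)=\frac{(N-\max\{k,\ell\})^++(N-k-\ell)^+}{8}+\frac{\alpha(\min\{k,\ell\},\max\{k,\ell\},\max\{k,\ell\})}{16}+\frac{\alpha(k+\ell,\ell,k+\ell)+\alpha(k+\ell,k,k+\ell)+\alpha(\ell,\ell-k,\ell)+\alpha(k,k-\ell,k)}{16}$, $\Pi(k,\ell,k,\ell)=\frac{(N-k-\ell)^+}{4}+\frac{\alpha(k+\ell,\min\{k,\ell\},k+\ell)}{4}+\frac{\alpha(k,k,k+\ell)+\alpha(\ell,\ell,k+\ell)}{8}$.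
   Context: $\mathbb{1}_{\{\cdot\}}$ denotes the indicator function. *)

From Stdlib Require Import Reals ZArith.
From Coquelicot Require Import Coquelicot.
Open Scope R_scope.

Definition Kn (N : nat) (x y : R) : R :=
  2 * sum_n (fun j => sin ((2 * INR j + 1) / 2 * x) * sin ((2 * INR j + 1) / 2 * y)) (N - 1)%nat.
(* note: sum_n f m = f 0 + ... + f m, so (N-1) gives the N terms j = 0..N-1 for N >= 1 *)

Definition Pi1 (N : nat) (a : Z) : R :=
  / PI * RInt (fun x => Kn N x x * cos (IZR a * x)) 0 PI.

Definition Pi2 (N : nat) (a b : Z) : R :=
  / PI ^ 2 * RInt (fun x => RInt (fun y =>
      (Kn N x y) ^ 2 * cos (IZR a * x) * cos (IZR b * y)) 0 PI) 0 PI.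

Definition Pi3 (N : nat) (a b c : Z) : R :=
  / PI ^ 3 * RInt (fun x => RInt (fun y => RInt (fun z =>
      Kn N x y * Kn N y z * Kn N z x
      * cos (IZR a * x) * cos (IZR b * y) * cos (IZR c * z)) 0 PI) 0 PI) 0 PI.

Definition Pi4 (N : nat) (a b c d : Z) : R :=
  / PI ^ 4 * RInt (fun x => RInt (fun y => RInt (fun z => RInt (fun w =>
      Kn N x y * Kn N y z * Kn N z w * Kn N w x
      * cos (IZR a * x) * cos (IZR b * y) * cos (IZR c * z) * cos (IZR d * w))
      0 PI) 0 PI) 0 PI) 0 PI.

Definition zpos (x : Z) : Z := Z.max x 0.

Definition eps (N : nat) (a : Z) : R :=
  if ((1 <=? a)%Z && (a <=? 2 * Z.of_nat N - 1)%Z && Z.odd a)%bool then 1 else 0.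

Definition alpha (N : nat) (a b c : Z) : Z :=
  zpos (Z.min a (Z.of_nat N) + Z.min b (Z.of_nat N) - c).

From Stdlib Require Import Reals ZArith Lia Lra List.
From Coquelicot Require Import Coquelicot.
Import ListNotations.
Open Scope R_scope.

(* With [φ_u(x) = sin((u + 1/2) x)] one has [φ_(-1-u) = - φ_u], so the kernel is the symmetric
   window sum [K(x,y) = Σ_(-N <= u < N) φ_u(x) φ_u(y)].  The product-to-sum formula gives
   [(1/π) ∫_0^π φ_u φ_v cos(c x) dx = M_c(u,v)], a combination of four Kronecker deltas, so
   integrating the variables out one at a time turns every [Π] into the trace of a product of
   the matrices [M_c] over the window.  On vectors antisymmetric under [u ↦ -1-u] the matrix
   [M_c] acts as the average of the two shifts by [±c], truncated to the window.  Expanding the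
   product therefore yields a sum over the [2^k] sign patterns of lattice paths with steps
   [±c_i] that stay in the window; for each pattern the starting points form an interval, and
   the trace becomes an explicit piecewise-linear integer in [N], [k], [l], evaluated case by
   case. *)

Fixpoint sumZ (lo : Z) (n : nat) (f : Z -> R) : R :=
  match n with
  | O => 0
  | S n' => f lo + sumZ (lo + 1) n' f
  end.

Notation sumW N f := (sumZ (- Z.of_nat N) (2 * N) f).

Lemma sumZ_ext lo n f g :
  (forall z, (lo <= z < lo + Z.of_nat n)%Z -> f z = g z) -> sumZ lo n f = sumZ lo n g.
Proof.
  revert lo; induction n as [|n IH]; intros lo H; simpl; auto.
  rewrite H by lia; f_equal; apply IH; intros z Hz; apply H; lia.
Qed.

Lemma sumZ_plus lo n f g : sumZ lo n (fun z => f z + g z) = sumZ lo n f + sumZ lo n g.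
Proof. revert lo; induction n as [|n IH]; intros lo; simpl; rewrite ?IH; ring. Qed.

Lemma sumZ_minus lo n f g : sumZ lo n (fun z => f z - g z) = sumZ lo n f - sumZ lo n g.
Proof. revert lo; induction n as [|n IH]; intros lo; simpl; rewrite ?IH; ring. Qed.

Lemma sumZ_scal_l lo n c f : sumZ lo n (fun z => c * f z) = c * sumZ lo n f.
Proof. revert lo; induction n as [|n IH]; intros lo; simpl; rewrite ?IH; ring. Qed.

Lemma sumZ_scal_r lo n c f : sumZ lo n (fun z => f z * c) = sumZ lo n f * c.
Proof. revert lo; induction n as [|n IH]; intros lo; simpl; rewrite ?IH; ring. Qed.

Lemma sumZ_0 lo n : sumZ lo n (fun _ => 0) = 0.
Proof. revert lo; induction n as [|n IH]; intros lo; simpl; rewrite ?IH; ring. Qed.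

Lemma sumZ_swap lo n lo' n' (f : Z -> Z -> R) :
  sumZ lo n (fun i => sumZ lo' n' (fun j => f i j))
  = sumZ lo' n' (fun j => sumZ lo n (fun i => f i j)).
Proof.
  revert lo; induction n as [|n IH]; intros lo; simpl.
  - now rewrite sumZ_0.
  - now rewrite IH, <- sumZ_plus.
Qed.

Lemma sumZ_mul lo n lo' n' f g :
  sumZ lo n f * sumZ lo' n' g = sumZ lo n (fun i => sumZ lo' n' (fun j => f i * g j)).
Proof.
  rewrite <- sumZ_scal_r; apply sumZ_ext; intros i _.
  now rewrite <- sumZ_scal_l.
Qed.

Lemma sumZ_S lo n f : sumZ lo (S n) f = f lo + sumZ (lo + 1) n f.
Proof. reflexivity. Qed.

Lemma sumZ_Sr lo n f : sumZ lo (S n) f = sumZ lo n f + f (lo + Z.of_nat n)%Z.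
Proof.
  revert lo; induction n as [|n IH]; intros lo.
  - simpl; rewrite Z.add_0_r; ring.
  - rewrite sumZ_S, IH, sumZ_S.
    replace (lo + 1 + Z.of_nat n)%Z with (lo + Z.of_nat (S n))%Z by lia; ring.
Qed.

Definition indic (b : bool) : R := if b then 1 else 0.
Definition kdelta (z : Z) : R := indic (z =? 0)%Z.

Lemma sumZ_kdelta lo n t g :
  sumZ lo n (fun p => kdelta (p - t) * g p)
  = indic ((lo <=? t)%Z && (t <? lo + Z.of_nat n)%Z) * g t.
Proof.
  revert lo; induction n as [|n IH]; intros lo; simpl sumZ.
  - destruct (Z.leb_spec lo t), (Z.ltb_spec t (lo + Z.of_nat 0)); simpl; try lia; ring.
  - rewrite IH; unfold kdelta.
    destruct (Z.eqb_spec (lo - t) 0), (Z.leb_spec lo t), (Z.ltb_spec t (lo + Z.of_nat (S n))),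
      (Z.leb_spec (lo + 1) t), (Z.ltb_spec t (lo + 1 + Z.of_nat n)); simpl; try lia;
      try (replace t with lo by lia); ring.
Qed.

Lemma sumZ_count lo n a b :
  sumZ lo n (fun q => indic ((a <=? q)%Z && (q <? b)%Z))
  = IZR (Z.max 0 (Z.min b (lo + Z.of_nat n) - Z.max a lo)).
Proof.
  revert lo; induction n as [|n IH]; intros lo; simpl sumZ.
  - f_equal; lia.
  - rewrite IH; destruct (Z.leb_spec a lo), (Z.ltb_spec lo b); simpl;
      rewrite ?Rplus_0_l, <- ?(plus_IZR 1); f_equal; lia.
Qed.

(** * Integrals of products of half-integer sines *)

Definition half_sin (u : Z) (x : R) : R := sin ((IZR u + /2) * x).

Definition cosmat (c u v : Z) : R :=
  /4 * (kdelta (u - v + c) + kdelta (u - v - c) - kdelta (u + v + 1 + c) - kdelta (u + v + 1 - c)).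

Lemma is_RInt_const_R (c a b : R) : is_RInt (fun _ => c) a b ((b - a) * c).
Proof. exact (is_RInt_const a b c). Qed.

Lemma is_RInt_Rplus f g (a b u v : R) :
  is_RInt f a b u -> is_RInt g a b v -> is_RInt (fun x => f x + g x) a b (u + v).
Proof. exact (is_RInt_plus f g a b u v). Qed.

Lemma is_RInt_Rminus f g (a b u v : R) :
  is_RInt f a b u -> is_RInt g a b v -> is_RInt (fun x => f x - g x) a b (u - v).
Proof. exact (is_RInt_minus f g a b u v). Qed.

Lemma is_RInt_sumZ lo n (f : Z -> R -> R) (v : Z -> R) (a b : R) :
  (forall i, is_RInt (f i) a b (v i)) ->
  is_RInt (fun x => sumZ lo n (fun i => f i x)) a b (sumZ lo n v).
Proof.
  intros Hf; revert lo; induction n as [|n IH]; intros lo; simpl.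
  - pose proof (is_RInt_const_R 0 a b) as H0; now rewrite Rmult_0_r in H0.
  - now apply is_RInt_Rplus.
Qed.

Lemma is_RInt_cos_int (n : Z) : is_RInt (fun x => cos (IZR n * x)) 0 PI (PI * kdelta n).
Proof.
  unfold kdelta; destruct (Z.eqb_spec n 0) as [->|Hn]; cbn [indic].
  - apply (is_RInt_ext (fun _ => 1)).
    { intros x _; now rewrite Rmult_0_l, cos_0. }
    replace (PI * 1) with ((PI - 0) * 1) by ring; apply is_RInt_const_R.
  - assert (Hn' : IZR n <> 0) by now apply not_0_IZR.
    replace (PI * 0) with (sin (IZR n * PI) / IZR n - sin (IZR n * 0) / IZR n)
      by (rewrite Rmult_0_r, sin_0, (sin_eq_0_1 _ (ex_intro _ n eq_refl)); field; auto).
    apply (is_RInt_derive (fun x => sin (IZR n * x) / IZR n)).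
    + intros x _; auto_derive; auto; field; auto.
    + intros x _; apply (ex_derive_continuous (V := R_NormedModule)); auto_derive; auto.
Qed.

Lemma sin_sin_cos A B C :
  sin A * sin B * cos C
  = /4 * (cos (A - B + C) + cos (A - B - C) - cos (A + B + C) - cos (A + B - C)).
Proof. rewrite !cos_plus, !cos_minus, !sin_minus, !cos_plus, !sin_plus; field. Qed.

Lemma is_RInt_half_sin_cos c u v :
  is_RInt (fun x => half_sin u x * half_sin v x * cos (IZR c * x)) 0 PI (PI * cosmat c u v).
Proof.
  set (freq (w : Z) x := cos (IZR w * x)).
  apply (is_RInt_ext (fun x => /4 * (freq (u - v + c)%Z x + freq (u - v - c)%Z x
                                     - freq (u + v + 1 + c)%Z x - freq (u + v + 1 - c)%Z x))).
  { intros x _; unfold half_sin, freq; rewrite sin_sin_cos.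
    rewrite !plus_IZR, !minus_IZR, !plus_IZR.
    replace ((IZR u + IZR v + 1 + IZR c) * x) with
      ((IZR u + /2) * x + (IZR v + /2) * x + IZR c * x) by field.
    replace ((IZR u + IZR v + 1 - IZR c) * x) with
      ((IZR u + /2) * x + (IZR v + /2) * x - IZR c * x) by field.
    replace ((IZR u - IZR v + IZR c) * x) with
      ((IZR u + /2) * x - (IZR v + /2) * x + IZR c * x) by field.
    replace ((IZR u - IZR v - IZR c) * x) with
      ((IZR u + /2) * x - (IZR v + /2) * x - IZR c * x) by field.
    reflexivity. }
  replace (PI * cosmat c u v) with
    (/4 * (PI * kdelta (u - v + c) + PI * kdelta (u - v - c)
           - PI * kdelta (u + v + 1 + c) - PI * kdelta (u + v + 1 - c)))
    by (unfold cosmat; ring).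
  apply (is_RInt_scal (V := R_NormedModule)).
  apply is_RInt_Rminus; [apply is_RInt_Rminus; [apply is_RInt_Rplus|] |]; apply is_RInt_cos_int.
Qed.

Definition in_window (N : nat) (z : Z) : bool := (- Z.of_nat N <=? z)%Z && (z <? Z.of_nat N)%Z.

Lemma sumW_kdelta N t g : sumW N (fun p => kdelta (p - t) * g p) = indic (in_window N t) * g t.
Proof.
  rewrite sumZ_kdelta; unfold in_window.
  now replace (- Z.of_nat N + Z.of_nat (2 * N))%Z with (Z.of_nat N) by lia.
Qed.

Lemma in_window_reflect N z : in_window N (-1 - z) = in_window N z.
Proof.
  unfold in_window.
  destruct (Z.leb_spec (- Z.of_nat N) (-1 - z)), (Z.ltb_spec (-1 - z) (Z.of_nat N)),
    (Z.leb_spec (- Z.of_nat N) z), (Z.ltb_spec z (Z.of_nat N)); simpl; lia.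
Qed.

Lemma kdelta_eq_or_opp z w : (z = w \/ z = - w)%Z -> kdelta z = kdelta w.
Proof. intros H; unfold kdelta; now destruct (Z.eqb_spec z 0), (Z.eqb_spec w 0); try lia. Qed.

Lemma kdelta_double w : kdelta (2 * w) = kdelta w.
Proof. unfold kdelta; now destruct (Z.eqb_spec (2 * w) 0), (Z.eqb_spec w 0); try lia. Qed.

Lemma cosmat_sym c u v : cosmat c u v = cosmat c v u.
Proof.
  unfold cosmat.
  rewrite (kdelta_eq_or_opp (u - v + c) (v - u - c)), (kdelta_eq_or_opp (u - v - c) (v - u + c)),
    (kdelta_eq_or_opp (u + v + 1 + c) (v + u + 1 + c)),
    (kdelta_eq_or_opp (u + v + 1 - c) (v + u + 1 - c))
    by lia.
  ring.
Qed.

Definition antisym (g : Z -> R) : Prop := forall p, g (-1 - p)%Z = - g p.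

Lemma cosmat_antisym c q : antisym (fun r => cosmat c r q).
Proof.
  intros r; unfold cosmat.
  rewrite (kdelta_eq_or_opp (-1 - r - q + c) (r + q + 1 - c)),
    (kdelta_eq_or_opp (-1 - r - q - c) (r + q + 1 + c)),
    (kdelta_eq_or_opp (-1 - r + q + 1 + c) (r - q - c)),
    (kdelta_eq_or_opp (-1 - r + q + 1 - c) (r - q + c)) by lia.
  ring.
Qed.

Definition avg_shift (N : nat) (c : Z) (g : Z -> R) (v : Z) : R :=
  /2 * (indic (in_window N (v + c)) * g (v + c)%Z + indic (in_window N (v - c)) * g (v - c)%Z).

(* Of the four deltas in [cosmat c v p], the two reflected ones pick [p = -1 - (v +- c)];
   antisymmetry of [g] turns their contributions into copies of the direct ones. *)
Lemma sumW_cosmat_antisym N c g v :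
  antisym g -> sumW N (fun p => cosmat c v p * g p) = avg_shift N c g v.
Proof.
  intros Hg.
  transitivity (/4 * (sumW N (fun p => kdelta (p - (v + c)) * g p)
                      + sumW N (fun p => kdelta (p - (v - c)) * g p)
                      - sumW N (fun p => kdelta (p - (-1 - (v + c))) * g p)
                      - sumW N (fun p => kdelta (p - (-1 - (v - c))) * g p))).
  { rewrite <- !sumZ_plus, <- !sumZ_minus, <- sumZ_scal_l.
    apply sumZ_ext; intros p _; unfold cosmat.
    rewrite (kdelta_eq_or_opp (v - p + c) (p - (v + c))),
      (kdelta_eq_or_opp (v - p - c) (p - (v - c))),
      (kdelta_eq_or_opp (v + p + 1 + c) (p - (-1 - (v + c)))),
      (kdelta_eq_or_opp (v + p + 1 - c) (p - (-1 - (v - c)))) by lia.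
    ring. }
  rewrite !sumW_kdelta, !in_window_reflect, !Hg; unfold avg_shift; field.
Qed.

Lemma avg_shift_antisym N c g : antisym g -> antisym (avg_shift N c g).
Proof.
  intros Hg p; unfold avg_shift.
  replace (-1 - p + c)%Z with (-1 - (p - c))%Z by lia.
  replace (-1 - p - c)%Z with (-1 - (p + c))%Z by lia.
  rewrite !in_window_reflect, !Hg; ring.
Qed.

Definition shift_chain (N : nat) (fs : list Z) (g : Z -> R) : Z -> R :=
  fold_right (avg_shift N) g fs.

Lemma shift_chain_antisym N fs g : antisym g -> antisym (shift_chain N fs g).
Proof. intros Hg; induction fs as [|c fs IH]; simpl; auto using avg_shift_antisym. Qed.

(** * Reduction of the integrals to traces *)

Lemma sumW_fold N f : sumW N f = sumZ 0 N (fun u => f u + f (-1 - u)%Z).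
Proof.
  induction N as [|N IH]; [reflexivity|].
  replace (2 * S N)%nat with (S (S (2 * N))) by lia.
  rewrite (sumZ_Sr (- Z.of_nat (S N))), sumZ_S, (sumZ_Sr 0), <- IH.
  replace (- Z.of_nat (S N) + 1)%Z with (- Z.of_nat N)%Z by lia.
  replace (- Z.of_nat (S N) + Z.of_nat (S (2 * N)))%Z with (0 + Z.of_nat N)%Z by lia.
  replace (-1 - (0 + Z.of_nat N))%Z with (- Z.of_nat (S N))%Z by lia.
  ring.
Qed.

Lemma sum_n_sumZ (g : nat -> R) M : sum_n g M = sumZ 0 (S M) (fun z => g (Z.to_nat z)).
Proof.
  induction M as [|M IH].
  - rewrite sum_O; simpl; ring.
  - rewrite sum_Sn, sumZ_Sr, IH, Z.add_0_l, Nat2Z.id; reflexivity.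
Qed.

Lemma half_sin_reflect u x : half_sin (-1 - u) x = - half_sin u x.
Proof. unfold half_sin; rewrite <- sin_neg, minus_IZR; f_equal; field. Qed.

Definition Kw (N : nat) (x y : R) : R := sumW N (fun u => half_sin u x * half_sin u y).

Lemma Kn_Kw N x y : (1 <= N)%nat -> Kn N x y = Kw N x y.
Proof.
  intros HN; unfold Kn, Kw.
  rewrite sum_n_sumZ, sumW_fold; replace (S (N - 1)) with N by lia.
  rewrite <- sumZ_scal_l; apply sumZ_ext; intros u Hu.
  rewrite !half_sin_reflect; unfold half_sin.
  rewrite INR_IZR_INZ, Z2Nat.id by lia.
  replace ((2 * IZR u + 1) / 2) with (IZR u + /2) by field.
  ring.
Qed.

Lemma Kn_sym N x y : Kn N x y = Kn N y x.
Proof. unfold Kn; f_equal; apply sum_n_ext; intros j; apply Rmult_comm. Qed.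

(* [chain_col N [c_1; ...; c_k] d q] is column [q] of the window product [M_(c_1) ⋯ M_(c_k) M_d]
   of the matrices [M_c = cosmat c] (by [sumW_cosmat_antisym]), and [chain_kernel] is the kernel
   of that product in the basis [half_sin]. *)
Definition chain_col (N : nat) (fs : list Z) (d q : Z) : Z -> R :=
  shift_chain N fs (fun r => cosmat d r q).

Lemma chain_col_cons N c fs d q : chain_col N (c :: fs) d q = avg_shift N c (chain_col N fs d q).
Proof. reflexivity. Qed.

Lemma chain_col_antisym N fs d q : antisym (chain_col N fs d q).
Proof. apply shift_chain_antisym, cosmat_antisym. Qed.

Definition chain_kernel (N : nat) (fs : list Z) (d : Z) (y x : R) : R :=
  sumW N (fun v => sumW N (fun q => chain_col N fs d q v * (half_sin v y * half_sin q x))).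

Definition chain_trace (N : nat) (fs : list Z) (d : Z) : R :=
  sumW N (fun q => chain_col N fs d q q).

Lemma is_RInt_sumW2_half_sin_cos N (B : Z -> Z -> R) c :
  is_RInt (fun z => sumW N (fun v => sumW N (fun p =>
                       B v p * (half_sin v z * half_sin p z * cos (IZR c * z)))))
    0 PI (sumW N (fun v => sumW N (fun p => B v p * (PI * cosmat c v p)))).
Proof.
  apply is_RInt_sumZ; intros v; apply is_RInt_sumZ; intros p.
  apply (is_RInt_scal (V := R_NormedModule)), is_RInt_half_sin_cos.
Qed.

Lemma is_RInt_Kn_diag_cos N a :
  (1 <= N)%nat -> is_RInt (fun x => Kn N x x * cos (IZR a * x)) 0 PI (PI * chain_trace N [] a).
Proof.
  intros HN; unfold chain_trace, chain_col; simpl shift_chain; rewrite <- sumZ_scal_l.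
  apply (is_RInt_ext (fun x => sumW N (fun u => half_sin u x * half_sin u x * cos (IZR a * x)))).
  { intros x _; rewrite Kn_Kw by exact HN; unfold Kw; now rewrite <- sumZ_scal_r. }
  apply is_RInt_sumZ; intros u; apply is_RInt_half_sin_cos.
Qed.

Lemma is_RInt_Kn_Kn_cos N d z x :
  (1 <= N)%nat ->
  is_RInt (fun w => Kn N z w * Kn N w x * cos (IZR d * w)) 0 PI (PI * chain_kernel N [] d z x).
Proof.
  intros HN.
  apply (is_RInt_ext (fun w => sumW N (fun v => sumW N (fun q =>
    (half_sin v z * half_sin q x) * (half_sin v w * half_sin q w * cos (IZR d * w)))))).
  { intros w _; rewrite !Kn_Kw by exact HN; unfold Kw.
    rewrite sumZ_mul, <- sumZ_scal_r; apply sumZ_ext; intros v _.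
    rewrite <- sumZ_scal_r; apply sumZ_ext; intros q _; ring. }
  replace (PI * chain_kernel N [] d z x) with
    (sumW N (fun v => sumW N (fun q => (half_sin v z * half_sin q x) * (PI * cosmat d v q)))).
  { apply is_RInt_sumW2_half_sin_cos. }
  unfold chain_kernel, chain_col; simpl shift_chain.
  rewrite <- sumZ_scal_l; apply sumZ_ext; intros v _.
  rewrite <- sumZ_scal_l; apply sumZ_ext; intros q _; ring.
Qed.

Lemma is_RInt_Kn_chain_cos N c fs d y x :
  (1 <= N)%nat ->
  is_RInt (fun z => Kn N y z * chain_kernel N fs d z x * cos (IZR c * z)) 0 PI
    (PI * chain_kernel N (c :: fs) d y x).
Proof.
  intros HN.
  apply (is_RInt_ext (fun z => sumW N (fun v => sumW N (fun p =>
    (half_sin v y * sumW N (fun q => chain_col N fs d q p * half_sin q x))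
    * (half_sin v z * half_sin p z * cos (IZR c * z)))))).
  { intros z _; rewrite Kn_Kw by exact HN; unfold Kw, chain_kernel.
    rewrite sumZ_mul, <- sumZ_scal_r; apply sumZ_ext; intros v _.
    rewrite <- sumZ_scal_r; apply sumZ_ext; intros p _.
    rewrite <- !sumZ_scal_l, <- !sumZ_scal_r; apply sumZ_ext; intros q _; ring. }
  replace (PI * chain_kernel N (c :: fs) d y x) with
    (sumW N (fun v => sumW N (fun p =>
      (half_sin v y * sumW N (fun q => chain_col N fs d q p * half_sin q x)) * (PI * cosmat c v p)))).
  { apply is_RInt_sumW2_half_sin_cos. }
  unfold chain_kernel.
  rewrite <- sumZ_scal_l; apply sumZ_ext; intros v _.
  transitivity (sumW N (fun p => sumW N (fun q =>
    PI * cosmat c v p * chain_col N fs d q p * (half_sin v y * half_sin q x)))).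
  { apply sumZ_ext; intros p _.
    rewrite <- sumZ_scal_l, <- sumZ_scal_r; apply sumZ_ext; intros q _; ring. }
  rewrite sumZ_swap, <- sumZ_scal_l; apply sumZ_ext; intros q _.
  rewrite chain_col_cons, <- sumW_cosmat_antisym by apply chain_col_antisym.
  rewrite <- sumZ_scal_r, <- sumZ_scal_l; apply sumZ_ext; intros p _; ring.
Qed.

Lemma is_RInt_chain_diag_cos N a fs d :
  is_RInt (fun x => chain_kernel N fs d x x * cos (IZR a * x)) 0 PI (PI * chain_trace N (a :: fs) d).
Proof.
  apply (is_RInt_ext (fun x => sumW N (fun v => sumW N (fun q =>
    chain_col N fs d q v * (half_sin v x * half_sin q x * cos (IZR a * x)))))).
  { intros x _; unfold chain_kernel.
    rewrite <- sumZ_scal_r; apply sumZ_ext; intros v _.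
    rewrite <- sumZ_scal_r; apply sumZ_ext; intros q _; ring. }
  replace (PI * chain_trace N (a :: fs) d) with
    (sumW N (fun v => sumW N (fun q => chain_col N fs d q v * (PI * cosmat a v q)))).
  { apply is_RInt_sumW2_half_sin_cos. }
  unfold chain_trace.
  rewrite sumZ_swap, <- sumZ_scal_l; apply sumZ_ext; intros q _.
  rewrite chain_col_cons, <- sumW_cosmat_antisym by apply chain_col_antisym.
  rewrite <- sumZ_scal_l; apply sumZ_ext; intros v _.
  rewrite (cosmat_sym a v q); ring.
Qed.

Lemma RInt_ext_R (f g : R -> R) a b : (forall x, f x = g x) -> RInt f a b = RInt g a b.
Proof. intros H; apply RInt_ext; auto. Qed.

Lemma RInt_scal_is_RInt (c : R) f g a b v :
  is_RInt f a b v -> (forall x, g x = c * f x) -> RInt g a b = c * v.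
Proof.
  intros Hf Hg; apply is_RInt_unique.
  apply (is_RInt_ext (fun x => c * f x)); [intros x _; auto|].
  exact (is_RInt_scal f a b c v Hf).
Qed.

Lemma Pi1_chain N a : (1 <= N)%nat -> Pi1 N a = chain_trace N [] a.
Proof.
  intros HN; unfold Pi1.
  rewrite (RInt_scal_is_RInt 1 _ _ _ _ _ (is_RInt_Kn_diag_cos N a HN)) by (intros; ring).
  field; apply PI_neq0.
Qed.

Lemma Pi2_chain N a b : (1 <= N)%nat -> Pi2 N a b = chain_trace N [a] b.
Proof.
  intros HN; unfold Pi2.
  rewrite (RInt_ext_R _ (fun x => PI * (chain_kernel N [] b x x * cos (IZR a * x)))).
  { rewrite (RInt_scal_is_RInt PI _ _ _ _ _ (is_RInt_chain_diag_cos N a [] b)) by (intros; ring).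
    field; apply PI_neq0. }
  intros x.
  rewrite (RInt_scal_is_RInt (cos (IZR a * x)) _ _ _ _ _ (is_RInt_Kn_Kn_cos N b x x HN)); [ring|].
  intros y; rewrite (Kn_sym N y x); ring.
Qed.

Lemma Pi3_chain N a b c : (1 <= N)%nat -> Pi3 N a b c = chain_trace N [a; b] c.
Proof.
  intros HN; unfold Pi3.
  rewrite (RInt_ext_R _ (fun x => PI ^ 2 * (chain_kernel N [b] c x x * cos (IZR a * x)))).
  { rewrite (RInt_scal_is_RInt (PI ^ 2) _ _ _ _ _ (is_RInt_chain_diag_cos N a [b] c))
      by (intros; ring).
    field; apply PI_neq0. }
  intros x.
  rewrite (RInt_ext_R _ (fun y => PI * cos (IZR a * x)
                                  * (Kn N x y * chain_kernel N [] c y x * cos (IZR b * y)))).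
  { rewrite (RInt_scal_is_RInt (PI * cos (IZR a * x)) _ _ _ _ _
               (is_RInt_Kn_chain_cos N b [] c x x HN))
      by (intros; ring).
    ring. }
  intros y.
  rewrite (RInt_scal_is_RInt (Kn N x y * cos (IZR a * x) * cos (IZR b * y)) _ _ _ _ _
             (is_RInt_Kn_Kn_cos N c y x HN)) by (intros; ring).
  ring.
Qed.

Lemma Pi4_chain N a b c d : (1 <= N)%nat -> Pi4 N a b c d = chain_trace N [a; b; c] d.
Proof.
  intros HN; unfold Pi4.
  rewrite (RInt_ext_R _ (fun x => PI ^ 3 * (chain_kernel N [b; c] d x x * cos (IZR a * x)))).
  { rewrite (RInt_scal_is_RInt (PI ^ 3) _ _ _ _ _ (is_RInt_chain_diag_cos N a [b; c] d))
      by (intros; ring).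
    field; apply PI_neq0. }
  intros x.
  rewrite (RInt_ext_R _ (fun y => PI ^ 2 * cos (IZR a * x)
                                  * (Kn N x y * chain_kernel N [c] d y x * cos (IZR b * y)))).
  { rewrite (RInt_scal_is_RInt (PI ^ 2 * cos (IZR a * x)) _ _ _ _ _
               (is_RInt_Kn_chain_cos N b [c] d x x HN))
      by (intros; ring).
    ring. }
  intros y.
  rewrite (RInt_ext_R _ (fun z => PI * Kn N x y * cos (IZR a * x) * cos (IZR b * y)
                                  * (Kn N y z * chain_kernel N [] d z x * cos (IZR c * z)))).
  { rewrite (RInt_scal_is_RInt (PI * Kn N x y * cos (IZR a * x) * cos (IZR b * y)) _ _ _ _ _
               (is_RInt_Kn_chain_cos N c [] d y x HN)) by (intros; ring).
    ring. }
  intros z.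
  rewrite (RInt_scal_is_RInt (Kn N x y * Kn N y z * cos (IZR a * x) * cos (IZR b * y) * cos (IZR c * z))
             _ _ _ _ _ (is_RInt_Kn_Kn_cos N d z x HN)) by (intros; ring).
  ring.
Qed.

(** * Expansion into lattice paths *)

Fixpoint sum_steps {A : Type} (add : A -> A -> A) (fs : list Z) (F : list Z -> A) : A :=
  match fs with
  | [] => F []
  | a :: fs' => add (sum_steps add fs' (fun ts => F (a :: ts)))
                    (sum_steps add fs' (fun ts => F ((- a)%Z :: ts)))
  end.

Lemma sum_steps_ext fs (F G : list Z -> R) :
  (forall ts, F ts = G ts) -> sum_steps Rplus fs F = sum_steps Rplus fs G.
Proof. revert F G; induction fs as [|a fs IH]; intros F G H; simpl; auto; f_equal; auto. Qed.

Lemma sum_steps_scal fs c (F : list Z -> R) :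
  sum_steps Rplus fs (fun ts => c * F ts) = c * sum_steps Rplus fs F.
Proof. revert F; induction fs as [|a fs IH]; intros F; simpl; rewrite ?IH; ring. Qed.

Lemma sum_steps_IZR fs (F : list Z -> Z) :
  IZR (sum_steps Z.add fs F) = sum_steps Rplus fs (fun ts => IZR (F ts)).
Proof. revert F; induction fs as [|a fs IH]; intros F; simpl; rewrite ?plus_IZR, ?IH; auto. Qed.

Lemma sumW_sum_steps N fs (F : list Z -> Z -> R) :
  sumW N (fun q => sum_steps Rplus fs (fun ts => F ts q))
  = sum_steps Rplus fs (fun ts => sumW N (F ts)).
Proof.
  revert F; induction fs as [|a fs IH]; intros F; simpl; auto.
  rewrite sumZ_plus, !IH; reflexivity.
Qed.

Fixpoint path_ok (N : nat) (q : Z) (ts : list Z) : bool :=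
  match ts with
  | [] => true
  | t :: ts' => in_window N (q + t) && path_ok N (q + t) ts'
  end.

Fixpoint path_end (ts : list Z) : Z :=
  match ts with [] => 0%Z | t :: ts' => (t + path_end ts')%Z end.

Fixpoint path_min (ts : list Z) : Z :=
  match ts with [] => 0%Z | t :: ts' => Z.min 0 (t + path_min ts') end.

Fixpoint path_max (ts : list Z) : Z :=
  match ts with [] => 0%Z | t :: ts' => Z.max 0 (t + path_max ts') end.

Lemma shift_chain_paths N fs g q :
  shift_chain N fs g q
  = (/2) ^ length fs * sum_steps Rplus fs (fun ts => indic (path_ok N q ts) * g (q + path_end ts)%Z).
Proof.
  revert q; induction fs as [|a fs IH]; intros q.
  - simpl; rewrite Z.add_0_r; ring.
  - assert (Hstep : forall t,
        sum_steps Rplus fs (fun ts => indic (path_ok N q (t :: ts)) * g (q + path_end (t :: ts))%Z)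
        = indic (in_window N (q + t))
          * sum_steps Rplus fs (fun ts => indic (path_ok N (q + t) ts) * g (q + t + path_end ts)%Z)).
    { intros t; rewrite <- sum_steps_scal; apply sum_steps_ext; intros ts; simpl.
      rewrite Z.add_assoc; destruct (in_window N (q + t)); simpl; ring. }
    change (shift_chain N (a :: fs) g q) with (avg_shift N a (shift_chain N fs g) q).
    cbn [sum_steps length pow]; rewrite !Hstep; unfold avg_shift; rewrite !IH, Z.add_opp_r; ring.
Qed.

Definition path_lo (N : nat) (ts : list Z) : Z := (- Z.of_nat N - path_min ts)%Z.
Definition path_hi (N : nat) (ts : list Z) : Z := (Z.of_nat N - path_max ts)%Z.

Lemma path_min_nonpos ts : (path_min ts <= 0)%Z.
Proof. destruct ts; simpl; lia. Qed.

Lemma path_max_nonneg ts : (0 <= path_max ts)%Z.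
Proof. destruct ts; simpl; lia. Qed.

Lemma path_ok_interval N q ts :
  (in_window N q && path_ok N q ts)%bool = ((path_lo N ts <=? q)%Z && (q <? path_hi N ts)%Z)%bool.
Proof.
  unfold path_lo, path_hi; revert q; induction ts as [|t ts IH]; intros q; simpl path_ok.
  - unfold in_window; simpl; now rewrite !Z.sub_0_r, Bool.andb_true_r.
  - unfold in_window in *; rewrite IH; simpl path_min; simpl path_max.
    destruct (Z.leb_spec (- Z.of_nat N) q), (Z.ltb_spec q (Z.of_nat N)),
      (Z.leb_spec (- Z.of_nat N) (q + t)), (Z.ltb_spec (q + t) (Z.of_nat N)),
      (Z.leb_spec (- Z.of_nat N - path_min ts) (q + t)),
      (Z.ltb_spec (q + t) (Z.of_nat N - path_max ts)),
      (Z.leb_spec (- Z.of_nat N - Z.min 0 (t + path_min ts)) q),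
      (Z.ltb_spec q (Z.of_nat N - Z.max 0 (t + path_max ts)));
      simpl; lia.
Qed.

Definition kdeltaZ (z : Z) : Z := Z.b2z (z =? 0)%Z.

Lemma kdelta_IZR z : kdelta z = IZR (kdeltaZ z).
Proof. unfold kdelta, kdeltaZ; now destruct (z =? 0)%Z. Qed.

Lemma indic_andb a b : indic (a && b) = indic a * indic b.
Proof. destruct a, b; simpl; ring. Qed.

Lemma indic_IZR b : indic b = IZR (Z.b2z b).
Proof. now destruct b. Qed.

Definition path_count (N : nat) (ts : list Z) : Z := Z.max 0 (path_hi N ts - path_lo N ts).

Lemma sumW_path_ok N ts : sumW N (fun q => indic (path_ok N q ts)) = IZR (path_count N ts).
Proof.
  rewrite (sumZ_ext _ _ _ (fun q => indic ((path_lo N ts <=? q)%Z && (q <? path_hi N ts)%Z))).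
  - rewrite sumZ_count; f_equal; unfold path_count, path_lo, path_hi.
    pose proof (path_min_nonpos ts); pose proof (path_max_nonneg ts); lia.
  - intros q Hq; rewrite <- path_ok_interval.
    replace (in_window N q) with true; [reflexivity|].
    unfold in_window; destruct (Z.leb_spec (- Z.of_nat N) q), (Z.ltb_spec q (Z.of_nat N)); simpl; lia.
Qed.

(* [2 q + 1 + S = 0] has the solution [q = - ((S + 1) / 2)] exactly when [S] is odd. *)
Definition path_hit (N : nat) (ts : list Z) (S : Z) : Z :=
  if Z.odd S
  then Z.b2z ((path_lo N ts <=? - ((S + 1) / 2))%Z && (- ((S + 1) / 2) <? path_hi N ts)%Z)
  else 0%Z.

Lemma sumW_path_ok_kdelta N ts S :
  sumW N (fun q => indic (path_ok N q ts) * kdelta (2 * q + 1 + S)) = IZR (path_hit N ts S).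
Proof.
  unfold path_hit; destruct (Z.odd S) eqn:HS.
  - apply Z.odd_spec in HS; destruct HS as [t ->].
    replace ((2 * t + 1 + 1) / 2)%Z with (t + 1)%Z by (apply Z.div_unique_exact; lia).
    rewrite (sumZ_ext _ _ _ (fun q => kdelta (q - - (t + 1)) * indic (path_ok N q ts)))
      by (intros q _; rewrite Rmult_comm, <- (kdelta_double (q - - (t + 1))); do 2 f_equal; lia).
    now rewrite sumW_kdelta, <- indic_andb, path_ok_interval, indic_IZR.
  - rewrite (sumZ_ext _ _ _ (fun _ => 0)); [apply sumZ_0|].
    intros q _; unfold kdelta; destruct (Z.eqb_spec (2 * q + 1 + S) 0); simpl; [|ring].
    assert (Z.odd S = true) by (apply Z.odd_spec; exists (- q - 1)%Z; lia); congruence.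
Qed.

Definition path_weight (N : nat) (d : Z) (ts : list Z) : Z :=
  ((kdeltaZ (path_end ts + d) + kdeltaZ (path_end ts - d)) * path_count N ts
   - path_hit N ts (path_end ts + d) - path_hit N ts (path_end ts - d))%Z.

Lemma sumW_path_cosmat N d ts :
  sumW N (fun q => indic (path_ok N q ts) * cosmat d (q + path_end ts) q)
  = /4 * IZR (path_weight N d ts).
Proof.
  set (T := path_end ts).
  rewrite (sumZ_ext _ _ _ (fun q => /4 * ((kdelta (T + d) + kdelta (T - d)) * indic (path_ok N q ts)
                                           - indic (path_ok N q ts) * kdelta (2 * q + 1 + (T + d))
                                           - indic (path_ok N q ts) * kdelta (2 * q + 1 + (T - d))))).
  - rewrite sumZ_scal_l, !sumZ_minus, sumZ_scal_l, sumW_path_ok, !sumW_path_ok_kdelta, !kdelta_IZR.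
    unfold path_weight; fold T; rewrite !minus_IZR, mult_IZR, plus_IZR; ring.
  - intros q _; unfold cosmat.
    rewrite (kdelta_eq_or_opp (q + T - q + d) (T + d)), (kdelta_eq_or_opp (q + T - q - d) (T - d)),
      (kdelta_eq_or_opp (q + T + q + 1 + d) (2 * q + 1 + (T + d))),
      (kdelta_eq_or_opp (q + T + q + 1 - d) (2 * q + 1 + (T - d))) by lia.
    ring.
Qed.

Lemma chain_trace_paths N fs d :
  chain_trace N fs d = IZR (sum_steps Z.add fs (path_weight N d)) / (4 * 2 ^ length fs).
Proof.
  unfold chain_trace, chain_col.
  rewrite (sumZ_ext _ _ _ (fun q => (/2) ^ length fs
     * sum_steps Rplus fs (fun ts => indic (path_ok N q ts) * cosmat d (q + path_end ts) q)))
    by (intros; apply shift_chain_paths).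
  rewrite sumZ_scal_l, sumW_sum_steps, sum_steps_IZR.
  rewrite (sum_steps_ext _ _ (fun ts => /4 * IZR (path_weight N d ts)))
    by (intros; apply sumW_path_cosmat).
  rewrite sum_steps_scal, pow_inv; field; apply pow_nonzero; lra.
Qed.

Definition epsZ (N : nat) (a : Z) : Z :=
  Z.b2z ((1 <=? a)%Z && (a <=? 2 * Z.of_nat N - 1)%Z && Z.odd a).

Lemma eps_IZR N a : eps N a = IZR (epsZ N a).
Proof. unfold eps, epsZ; now destruct (_ && _)%bool. Qed.

Lemma chain_trace_of_weight_sum N fs d (X : Z) (r : R) :
  sum_steps Z.add fs (path_weight N d) = X -> IZR X / (4 * 2 ^ length fs) = r ->
  chain_trace N fs d = r.
Proof. intros HX Hr; now rewrite chain_trace_paths, HX. Qed.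

Ltac lia_div := Z.div_mod_to_equations; lia.

Ltac free_of_minmax x :=
  lazymatch x with
  | context [Z.max _ _] => fail
  | context [Z.min _ _] => fail
  | context [Z.abs _] => fail
  | _ => idtac
  end.

Ltac settle_or_split T F split := first [ rewrite T by lia_div | rewrite F by lia_div | split ].

Ltac decide_eqb :=
  match goal with
  | |- context [(?x =? ?y)%Z] =>
      settle_or_split (proj2 (Z.eqb_eq x y)) (proj2 (Z.eqb_neq x y)) ltac:(destruct (Z.eqb_spec x y))
  end; cbn [Z.b2z].

Ltac decide_test :=
  match goal with
  | |- context [(?x =? ?y)%Z] => free_of_minmax x; free_of_minmax y;
      settle_or_split (proj2 (Z.eqb_eq x y)) (proj2 (Z.eqb_neq x y)) ltac:(destruct (Z.eqb_spec x y))
  | |- context [(?x <=? ?y)%Z] => free_of_minmax x; free_of_minmax y;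
      settle_or_split (proj2 (Z.leb_le x y)) (proj2 (Z.leb_gt x y)) ltac:(destruct (Z.leb_spec x y))
  | |- context [(?x <? ?y)%Z] => free_of_minmax x; free_of_minmax y;
      settle_or_split (proj2 (Z.ltb_lt x y)) (proj2 (Z.ltb_ge x y)) ltac:(destruct (Z.ltb_spec x y))
  | |- context [Z.max ?x ?y] => free_of_minmax x; free_of_minmax y;
      settle_or_split (Z.max_l x y) (Z.max_r x y) ltac:(destruct (Z.max_spec x y) as [[? ->] | [? ->]])
  | |- context [Z.min ?x ?y] => free_of_minmax x; free_of_minmax y;
      settle_or_split (Z.min_l x y) (Z.min_r x y) ltac:(destruct (Z.min_spec x y) as [[? ->] | [? ->]])
  | |- context [Z.abs ?x] => free_of_minmax x;
      settle_or_split (Z.abs_eq x) (Z.abs_neq x) ltac:(destruct (Z.abs_spec x) as [[? ->] | [? ->]])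
  end; cbn [andb orb Z.b2z].

(* Tests and [min]/[max]/[abs]
   (innermost first) are rewritten away when [lia] settles them from the hypotheses, and split
   otherwise; deciding the Kronecker deltas first kills most patterns early. *)
Ltac weight_sum :=
  unfold path_weight, path_hit, path_count, path_lo, path_hi, kdeltaZ, epsZ, alpha, zpos;
  cbn [sum_steps path_end path_min path_max];
  rewrite ?Zodd_mod;
  repeat decide_eqb;
  rewrite ?Z.add_0_l, ?Z.add_0_r, ?Z.mul_0_l, ?Z.mul_0_r, ?Z.mul_1_l, ?Z.sub_0_r;
  repeat decide_test;
  lia_div.

Ltac real_value :=
  rewrite ?eps_IZR;
  repeat first [rewrite mult_IZR | rewrite plus_IZR | rewrite opp_IZR | rewrite minus_IZR];
  simpl pow; field.

Lemma Pi1_0 N : (1 <= N)%nat -> Pi1 N 0 = INR N.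
Proof.
  intros HN; rewrite Pi1_chain, INR_IZR_INZ by exact HN.
  apply (chain_trace_of_weight_sum _ _ _ (4 * Z.of_nat N)); [weight_sum | real_value].
Qed.

Lemma Pi2_0_0 N : (1 <= N)%nat -> Pi2 N 0 0 = INR N.
Proof.
  intros HN; rewrite Pi2_chain, INR_IZR_INZ by exact HN.
  apply (chain_trace_of_weight_sum _ _ _ (8 * Z.of_nat N)); [weight_sum | real_value].
Qed.

Lemma Pi1_pos N k : (1 <= N)%nat -> (1 <= k)%Z -> Pi1 N k = - eps N k / 2.
Proof.
  intros HN Hk; rewrite Pi1_chain by exact HN.
  apply (chain_trace_of_weight_sum _ _ _ (-2 * epsZ N k)); [weight_sum | real_value].
Qed.

Lemma Pi2_diag N k : (1 <= N)%nat -> (1 <= k)%Z -> Pi2 N k k = IZR (zpos (2 * Z.of_nat N - k)) / 4.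
Proof.
  intros HN Hk; rewrite Pi2_chain by exact HN.
  apply (chain_trace_of_weight_sum _ _ _ (2 * zpos (2 * Z.of_nat N - k))); [weight_sum | real_value].
Qed.

Lemma Pi2_offdiag N k l : (1 <= N)%nat -> (1 <= k)%Z -> (1 <= l)%Z -> k <> l ->
  Pi2 N k l = - eps N (k + l) / 2.
Proof.
  intros HN Hk Hl Hkl; rewrite Pi2_chain by exact HN.
  apply (chain_trace_of_weight_sum _ _ _ (-4 * epsZ N (k + l))); [weight_sum | real_value].
Qed.

Lemma Pi2_0_pos N k : (1 <= N)%nat -> (1 <= k)%Z -> Pi2 N 0 k = - eps N k / 2.
Proof.
  intros HN Hk; rewrite Pi2_chain by exact HN.
  apply (chain_trace_of_weight_sum _ _ _ (-4 * epsZ N k)); [weight_sum | real_value].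
Qed.

Lemma Pi3_double N l : (1 <= N)%nat -> (1 <= l)%Z ->
  Pi3 N (2 * l) l l = IZR (zpos (2 * Z.of_nat N - 2 * l)) / 8.
Proof.
  intros HN Hl; rewrite Pi3_chain by exact HN.
  apply (chain_trace_of_weight_sum _ _ _ (2 * zpos (2 * Z.of_nat N - 2 * l)));
    [weight_sum | real_value].
Qed.

Lemma Pi3_not_double N k l : (1 <= N)%nat -> (1 <= k)%Z -> (1 <= l)%Z -> k <> (2 * l)%Z ->
  Pi3 N k l l = - (3 * eps N (k + 2 * l) + eps N k * eps N (Z.abs (2 * l - k))) / 8.
Proof.
  intros HN Hk Hl Hkl; rewrite Pi3_chain by exact HN.
  apply (chain_trace_of_weight_sum _ _ _
           (-2 * (3 * epsZ N (k + 2 * l) + epsZ N k * epsZ N (Z.abs (2 * l - k)))));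
    [weight_sum | real_value].
Qed.

Lemma Pi3_sum N k l : (1 <= N)%nat -> (1 <= k)%Z -> (1 <= l)%Z ->
  Pi3 N k l (k + l) = IZR (zpos (Z.of_nat N - k - l)) / 4
                      + IZR (alpha N (k + l) l (k + l) + alpha N (k + l) k (k + l)) / 8.
Proof.
  intros HN Hk Hl; rewrite Pi3_chain by exact HN.
  apply (chain_trace_of_weight_sum _ _ _
           (4 * zpos (Z.of_nat N - k - l)
            + 2 * (alpha N (k + l) l (k + l) + alpha N (k + l) k (k + l))));
    [weight_sum | real_value].
Qed.

Lemma Pi3_0_diag N k :
  (1 <= N)%nat -> (1 <= k)%Z -> Pi3 N 0 k k = IZR (zpos (2 * Z.of_nat N - k)) / 4.
Proof.
  intros HN Hk; rewrite Pi3_chain by exact HN.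
  apply (chain_trace_of_weight_sum _ _ _ (4 * zpos (2 * Z.of_nat N - k))); [weight_sum | real_value].
Qed.

Lemma Pi4_diag N k : (1 <= N)%nat -> (1 <= k)%Z ->
  Pi4 N k k k k = IZR (zpos (Z.of_nat N - k)) / 4 + IZR (zpos (2 * Z.of_nat N - k)) / 16.
Proof.
  intros HN Hk; rewrite Pi4_chain by exact HN.
  apply (chain_trace_of_weight_sum _ _ _ (8 * zpos (Z.of_nat N - k) + 2 * zpos (2 * Z.of_nat N - k)));
    [weight_sum | real_value].
Qed.

Lemma Pi4_pairs N k l : (1 <= N)%nat -> (1 <= k)%Z -> (1 <= l)%Z -> k <> l ->
  Pi4 N k k l l =
    IZR (zpos (Z.of_nat N - Z.max k l) + zpos (Z.of_nat N - k - l)) / 8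
    + IZR (alpha N (Z.min k l) (Z.max k l) (Z.max k l)) / 16
    + IZR (alpha N (k + l) l (k + l) + alpha N (k + l) k (k + l)
           + alpha N l (l - k) l + alpha N k (k - l) k) / 16.
Proof.
  intros HN Hk Hl Hkl; rewrite Pi4_chain by exact HN.
  apply (chain_trace_of_weight_sum _ _ _
           (4 * (zpos (Z.of_nat N - Z.max k l) + zpos (Z.of_nat N - k - l))
            + 2 * alpha N (Z.min k l) (Z.max k l) (Z.max k l)
            + 2 * (alpha N (k + l) l (k + l) + alpha N (k + l) k (k + l)
                   + alpha N l (l - k) l + alpha N k (k - l) k)));
    [weight_sum | real_value].
Qed.

Lemma Pi4_alternating N k l : (1 <= N)%nat -> (1 <= k)%Z -> (1 <= l)%Z -> k <> l ->
  Pi4 N k l k l =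
    IZR (zpos (Z.of_nat N - k - l)) / 4
    + IZR (alpha N (k + l) (Z.min k l) (k + l)) / 4
    + IZR (alpha N k k (k + l) + alpha N l l (k + l)) / 8.
Proof.
  intros HN Hk Hl Hkl; rewrite Pi4_chain by exact HN.
  apply (chain_trace_of_weight_sum _ _ _
           (8 * zpos (Z.of_nat N - k - l) + 8 * alpha N (k + l) (Z.min k l) (k + l)
            + 4 * (alpha N k k (k + l) + alpha N l l (k + l))));
    [weight_sum | real_value].
Qed.

Theorem lemma5 (N : nat) (HN : (1 <= N)%nat) :
  Pi1 N 0 = INR N /\ Pi2 N 0 0 = INR N /\
  forall k l : Z, (1 <= k)%Z -> (1 <= l)%Z ->
    let n := Z.of_nat N in
    Pi1 N k = - eps N k / 2 /\
    (k = l -> Pi2 N k l = IZR (zpos (2 * n - k)) / 4) /\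
    (k <> l -> Pi2 N k l = - eps N (k + l) / 2) /\
    Pi2 N 0 k = - eps N k / 2 /\
    (k = (2 * l)%Z -> Pi3 N k l l = IZR (zpos (2 * n - k)) / 8) /\
    (k <> (2 * l)%Z -> Pi3 N k l l =
       - (3 * eps N (k + 2 * l) + eps N k * eps N (Z.abs (2 * l - k))) / 8) /\
    Pi3 N k l (k + l) = IZR (zpos (n - k - l)) / 4
       + IZR (alpha N (k + l) l (k + l) + alpha N (k + l) k (k + l)) / 8 /\
    Pi3 N 0 k k = IZR (zpos (2 * n - k)) / 4 /\
    Pi4 N k k k k = IZR (zpos (n - k)) / 4 + IZR (zpos (2 * n - k)) / 16 /\
    (k <> l ->
      Pi4 N k k l l =
        IZR (zpos (n - Z.max k l) + zpos (n - k - l)) / 8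
        + IZR (alpha N (Z.min k l) (Z.max k l) (Z.max k l)) / 16
        + IZR (alpha N (k + l) l (k + l) + alpha N (k + l) k (k + l)
               + alpha N l (l - k) l + alpha N k (k - l) k) / 16) /\
    (k <> l ->
      Pi4 N k l k l =
        IZR (zpos (n - k - l)) / 4
        + IZR (alpha N (k + l) (Z.min k l) (k + l)) / 4
        + IZR (alpha N k k (k + l) + alpha N l l (k + l)) / 8).
Proof.
  split; [now apply Pi1_0|].
  split; [now apply Pi2_0_0|].
  intros k l Hk Hl n.
  repeat split.
  - now apply Pi1_pos.
  - intros <-; now apply Pi2_diag.
  - intros Hkl; now apply Pi2_offdiag.
  - now apply Pi2_0_pos.
  - intros ->; now apply Pi3_double.
  - intros Hkl; now apply Pi3_not_double.
  - now apply Pi3_sum.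
  - now apply Pi3_0_diag.
  - now apply Pi4_diag.
  - intros Hkl; now apply Pi4_pairs.
  - intros Hkl; now apply Pi4_alternating.
Qed.
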